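(* Let $\mathbb{F}$ be an arbitrary field. Let $P(t,y) \in \mathbb{F}[[t,y]]$ and $\varphi(t) \in \mathbb{F}[[t]]$ be formal power series such that $$P(t,y) = (y-\varphi(t))^e \cdot Q(t,y)$$ for some $Q \in \mathbb{F}[[t,y]]$ and some integer $e \ge 1$ that is invertible in $\mathbb{F}$. Suppose $\varphi(0)=0$ and $Q(0,0)\neq 0$. Then $$\varphi(t) = \mathcal{D}\left(\frac{y^2\cdot (\partial_y P)(ty,y)}{e\cdot P(ty,y)}\right),$$ where the quotient on the right-hand side is an element of $\mathbb{F}[[t,y]]$.
   Context: For a bivariate formal power series $F(t,y)=\sum_{i,j\ge 0}F_{i,j}t^iy^j$, the diagonal operator is $\mathcal{D}(F)(t) := \sum_{i\ge 0} F_{i,i}t^i$. Here $(\partial_y P)(ty,y)$ denotes the formal partial derivative of $P$ with respect to $y$, evaluated at $(ty,y)$. *)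

(* Formal power series are represented by their coefficients:
   F[[t]]   ~ nat -> F              (phi i = coefficient of t^i)
   F[[t,y]] ~ nat -> nat -> F       (A i j = coefficient of t^i y^j)
   Equality of series is coefficientwise equality. *)
From mathcomp Require Import all_boot all_order all_algebra.
Set Implicit Arguments. Unset Strict Implicit. Unset Printing Implicit Defensive.
Import GRing.Theory.
Local Open Scope ring_scope.

Section PS.
Variable F : fieldType.

Definition ps1 := nat -> F.
Definition ps2 := nat -> nat -> F.

Definition eqs2 (A B : ps2) : Prop := forall i j, A i j = B i j.

Definition mul2 (A B : ps2) : ps2 := fun i j =>
  \sum_(a < i.+1) \sum_(b < j.+1) A a b * B (i - a)%N (j - b)%N.

Definition one2 : ps2 := fun i j => if (i == 0%N) && (j == 0%N) then 1 else 0.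

Fixpoint pow2 (A : ps2) (n : nat) : ps2 :=
  match n with 0%N => one2 | n'.+1 => mul2 A (pow2 A n') end.

Definition scale2 (c : F) (A : ps2) : ps2 := fun i j => c * A i j.

Definition Y2 : ps2 := fun i j => if (i == 0%N) && (j == 1%N) then 1 else 0.

Definition y_minus (phi : ps1) : ps2 := fun i j =>
  (if (i == 0%N) && (j == 1%N) then 1 else 0) - (if j == 0%N then phi i else 0).

Definition dy2 (A : ps2) : ps2 := fun i j => (j.+1)%:R * A i j.+1.

(* substitution (t,y) |-> (ty,y):  A(ty,y) = sum A_{i,j} t^i y^(i+j) *)
Definition subst_ty (A : ps2) : ps2 := fun i j =>
  if (i <= j)%N then A i (j - i)%N else 0.

Definition diag2 (A : ps2) : ps1 := fun i => A i i.

End PS.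

From HB Require Import structures.
From mathcomp Require Import all_boot all_order all_algebra.
From mathcomp Require Import boolp ring zify.

(* Write [y - phi(ty) = y (1 - psi)] with [psi = phi(ty) / y], a power series
   because [phi(0) = 0].  Since [P_y / P = e / (y - phi) + Q_y / Q],
     [y^2 P_y(ty,y) / (e P(ty,y)) = y / (1 - psi) + y^2 (Q_y / (e Q))(ty,y)].
   The substitution [(t,y) |-> (ty,y)] only produces monomials [t^i y^j] with
   [i <= j], so the second summand vanishes on the diagonal; in
   [y / (1 - psi) = y (1 + psi + psi^2 + ...)] only [y psi] reaches the
   diagonal, where it is [phi].  The quotient is unique because [e P(ty,y)] is
   [y^e] times a unit.  Series in [t] and [y] are taken as series in [t] over
   series in [y]. *)

Set Implicit Arguments. Unset Strict Implicit. Unset Printing Implicit Defensive.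
Import GRing.Theory.
Local Open Scope ring_scope.

Definition fps (R : Type) := nat -> R.
HB.instance Definition _ (R : Type) := gen_eqMixin (fps R).
HB.instance Definition _ (R : Type) := gen_choiceMixin (fps R).

Section FpsZmodule.
Variable V : zmodType.
Implicit Types f g h : fps V.

Definition fps_zero : fps V := fun=> 0.
Definition fps_opp f : fps V := fun k => - f k.
Definition fps_add f g : fps V := fun k => f k + g k.

Lemma fps_addA : associative fps_add.
Proof. by move=> f g h; apply: funext => k; rewrite /fps_add addrA. Qed.

Lemma fps_addC : commutative fps_add.
Proof. by move=> f g; apply: funext => k; rewrite /fps_add addrC. Qed.

Lemma fps_add0 : left_id fps_zero fps_add.
Proof. by move=> f; apply: funext => k; rewrite /fps_add add0r. Qed.

Lemma fps_addN : left_inverse fps_zero fps_opp fps_add.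
Proof. by move=> f; apply: funext => k; rewrite /fps_add addNr. Qed.

End FpsZmodule.

HB.instance Definition _ (V : zmodType) :=
  GRing.isZmodule.Build (fps V) (@fps_addA V) (@fps_addC V) (@fps_add0 V) (@fps_addN V).

Lemma coef_fpsD (V : zmodType) (f g : fps V) k : (f + g) k = f k + g k.
Proof. by []. Qed.

Lemma coef_fpsB (V : zmodType) (f g : fps V) k : (f - g) k = f k - g k.
Proof. by []. Qed.

Lemma coef_fpsMn (V : zmodType) (f : fps V) n k : (f *+ n) k = f k *+ n.
Proof. by elim: n => // n IHn; rewrite !mulrS -IHn. Qed.

Section FpsRing.
Variable R : comNzRingType.
Implicit Types (f g h : fps R) (c : R).

Definition fpsC c : fps R := fun k => if k == 0 then c else 0.
Definition fpsX : fps R := fun k => if k == 1 then 1 else 0.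
Definition fps_mul f g : fps R := fun k => \sum_(a < k.+1) f a * g (k - a)%N.

Lemma fps_mulC : commutative fps_mul.
Proof.
move=> f g; apply: funext => k; rewrite /fps_mul (reindex_inj rev_ord_inj) /=.
by apply: eq_bigr => i _; rewrite subSS subKn 1?mulrC // -ltnS.
Qed.

Lemma fps_mul1 : left_id (fpsC 1) fps_mul.
Proof.
move=> f; apply: funext => k; rewrite /fps_mul big_ord_recl /= mul1r subn0.
by rewrite big1 ?addr0 // => i _; rewrite mul0r.
Qed.

Lemma fps_mulDl : left_distributive fps_mul (@fps_add R).
Proof.
move=> f g h; apply: funext => k; rewrite /fps_mul /fps_add -big_split /=.
by apply: eq_bigr => i _; rewrite mulrDl.
Qed.

Lemma fps_one_neq0 : fpsC 1 != fps_zero R.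
Proof. by apply/eqP => /(congr1 (fun f => f 0)); apply/eqP/oner_neq0. Qed.

Lemma fps_mulA : associative fps_mul.
Proof.
have mul_rev f g k : fps_mul f g k = \sum_(a < k.+1) f (k - a)%N * g a.
  by rewrite fps_mulC /fps_mul; apply: eq_bigr => i _; rewrite mulrC.
move=> f g h; apply: funext => i; rewrite [RHS]mul_rev /fps_mul.
transitivity (\sum_(j < i.+1) \sum_(k < i.+1 | (k <= i - j)%N)
                 f j * (g (i - j - k)%N * h k)).
  apply: eq_bigr => /= j _; rewrite -/(fps_mul g h (i - j)%N) mul_rev big_distrr /=.
  by rewrite (big_ord_narrow_leq (leq_subr _ _)).
rewrite (exchange_big_dep predT) //=; apply: eq_bigr => k _.
transitivity (\sum_(j < i.+1 | (j <= i - k)%N) f j * (g (i - j - k)%N * h k)).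
  apply: eq_bigl => j; rewrite -ltnS -(ltnS j) -!subSn ?leq_ord //.
  by rewrite -subn_gt0 -(subn_gt0 j) -!subnDA addnC.
rewrite (big_ord_narrow_leq (leq_subr _ _)) big_distrl /=.
by apply: eq_bigr => j _; rewrite -!subnDA (addnC k) mulrA.
Qed.

End FpsRing.

HB.instance Definition _ (R : comNzRingType) :=
  GRing.Zmodule_isComNzRing.Build (fps R)
    (@fps_mulA R) (@fps_mulC R) (@fps_mul1 R) (@fps_mulDl R) (@fps_one_neq0 R).

Section FpsRingTheory.
Variable R : comNzRingType.
Implicit Types (f g : fps R) (c : R).

Lemma coef_fpsM f g k : (f * g) k = \sum_(a < k.+1) f a * g (k - a)%N.
Proof. by []. Qed.

Lemma coef_fpsM0 f g : (f * g) 0 = f 0 * g 0.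
Proof. by rewrite coef_fpsM big_ord1. Qed.

Lemma coef_fpsCM c f k : (fpsC c * f) k = c * f k.
Proof.
rewrite coef_fpsM big_ord_recl /= subn0 big1 ?addr0 // => i _.
by rewrite mul0r.
Qed.

Lemma coef_fpsXM f k : (fpsX R * f) k = if k is k'.+1 then f k' else 0.
Proof.
rewrite coef_fpsM big_ord_recl /= mul0r add0r; case: k => [|k]; first exact: big_ord0.
rewrite big_ord_recl /= mul1r subSS subn0 big1 ?addr0 // => i _.
by rewrite mul0r.
Qed.

Lemma fpsC_rreg c : GRing.rreg c -> GRing.rreg (fpsC c).
Proof.
move=> c_reg f g fg; apply: funext => k; apply: c_reg; rewrite /= ![_ * c]mulrC.
by have := congr1 (fun h => h k) fg; rewrite /= ![_ * fpsC c]mulrC !coef_fpsCM.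
Qed.

Lemma fpsX_rreg : GRing.rreg (fpsX R).
Proof.
move=> f g fg; apply: funext => k.
by have := congr1 (fun h => h k.+1) fg; rewrite /= ![_ * fpsX R]mulrC !coef_fpsXM.
Qed.

End FpsRingTheory.

Section FpsInverse.
Variable R : comUnitRingType.
Implicit Types f g : fps R.

Section Recursion.
Variable f : fps R.

(* Coefficients [0..n] of the inverse of [f], solving [g * f = 1] degree by degree. *)
Fixpoint fps_inv_seq n : seq R :=
  if n is n'.+1 then
    rcons (fps_inv_seq n')
          (- (f 0)^-1 * \sum_(a < n'.+1) (fps_inv_seq n')`_a * f (n'.+1 - a)%N)
  else [:: (f 0)^-1].

Lemma size_fps_inv_seq n : size (fps_inv_seq n) = n.+1.
Proof. by elim: n => //= n IHn; rewrite size_rcons IHn. Qed.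

Lemma nth_fps_inv_seq k n : (k <= n)%N -> (fps_inv_seq n)`_k = (fps_inv_seq k)`_k.
Proof.
elim: n => [|n IHn] le_kn; first by case: k le_kn.
rewrite leq_eqVlt in le_kn; case/orP: le_kn => [/eqP -> //|lt_kn].
by rewrite /= nth_rcons size_fps_inv_seq lt_kn IHn.
Qed.

Definition fps_inv_of : fps R := fun k => (fps_inv_seq k)`_k.

Lemma fps_inv_ofK : f 0 \is a GRing.unit -> fps_inv_of * f = 1.
Proof.
move=> f0_unit; apply: funext => -[|n].
  by rewrite coef_fpsM0 /fps_inv_of /= mulVr.
rewrite coef_fpsM big_ord_recr /= subnn /fps_inv_of /= nth_rcons.
rewrite size_fps_inv_seq ltnn eqxx.
under eq_bigr => i _ do rewrite -(@nth_fps_inv_seq i n) -1?ltnS //.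
by rewrite mulrAC mulNr mulVr // mulN1r addrN.
Qed.

End Recursion.

Definition fps_inv f : fps R := if f 0 \is a GRing.unit then fps_inv_of f else f.

Lemma fps_mulVr : {in [pred f | f 0 \is a GRing.unit], left_inverse 1 fps_inv *%R}.
Proof. by move=> f; rewrite inE => f0_unit; rewrite /fps_inv f0_unit fps_inv_ofK. Qed.

Lemma fps_unitPl f g : g * f = 1 -> f 0 \is a GRing.unit.
Proof.
by move/(congr1 (fun h => h 0)); rewrite coef_fpsM0 => gf; apply/unitrPr; exists (g 0); rewrite mulrC.
Qed.

Lemma fps_inv_out : {in [predC [pred f | f 0 \is a GRing.unit]], fps_inv =1 id}.
Proof. by move=> f; rewrite !inE => /negbTE f0_nunit; rewrite /fps_inv f0_nunit. Qed.

End FpsInverse.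

HB.instance Definition _ (R : comUnitRingType) :=
  GRing.ComNzRing_hasMulInverse.Build (fps R)
    (@fps_mulVr R) (@fps_unitPl R) (@fps_inv_out R).

Lemma fps_unitE (R : comUnitRingType) (f : fps R) :
  (f \is a GRing.unit) = (f 0 \is a GRing.unit).
Proof. by []. Qed.

Lemma coef_fps_sum (V : zmodType) (I : Type) (r : seq I) (P : pred I)
    (E : I -> fps V) k :
  (\sum_(i <- r | P i) E i) k = \sum_(i <- r | P i) E i k.
Proof. exact: (big_morph (fun f : fps V => f k)). Qed.

Section Bivariate.
Variable F : fieldType.
Local Notation fps2 := (fps (fps F)).
Local Notation Y := (Y2 F : fps2).
Implicit Types A B : fps2.

Lemma mul2E (A B : ps2 F) : mul2 A B = (A : fps2) * B.
Proof.
apply: funext => i; apply: funext => j.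
by rewrite coef_fpsM coef_fps_sum; apply: eq_bigr => a _; rewrite coef_fpsM.
Qed.

Lemma one2E : one2 F = 1 :> fps2.
Proof. by apply: funext => -[|i]; apply: funext => -[|j]. Qed.

Lemma pow2E (A : ps2 F) n : pow2 A n = (A : fps2) ^+ n.
Proof. by elim: n => [|n IHn] /=; rewrite ?one2E // IHn mul2E exprS. Qed.

Lemma scale2_natE n (A : ps2 F) : scale2 n%:R A = n%:R * (A : fps2).
Proof.
apply: funext => i; apply: funext => j.
by rewrite mulr_natl !coef_fpsMn /scale2 mulr_natl.
Qed.

Lemma Y2E : Y2 F = fpsC (fpsX F) :> fps2.
Proof. by apply: funext => -[|i]; apply: funext => j. Qed.

Lemma coef_Y2M A i j : (Y * A) i j = if j is j'.+1 then A i j' else 0.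
Proof. by rewrite Y2E coef_fpsCM coef_fpsXM. Qed.

Lemma Y2_rreg : GRing.rreg Y.
Proof. by rewrite Y2E; apply/fpsC_rreg/fpsX_rreg. Qed.

Lemma coef_fps2_natr n : (n%:R : fps2) 0 0 = n%:R.
Proof. by rewrite !coef_fpsMn. Qed.

Lemma fps2_unitE A : (A \is a GRing.unit) = (A 0 0 != 0).
Proof. by rewrite !fps_unitE unitfE. Qed.

End Bivariate.

(* [subst_ty], typed on [fps (fps F)] so that it can carry a ring morphism structure. *)
Definition subst_ty_fps (F : fieldType) : fps (fps F) -> fps (fps F) := @subst_ty F.

Section SubstTy.
Variable F : fieldType.
Local Notation fps2 := (fps (fps F)).
Local Notation St := (@subst_ty_fps F).
Implicit Types A B : fps2.

Lemma subst_ty_is_zmod_morphism : zmod_morphism St.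
Proof.
move=> A B; apply: funext => i; apply: funext => j; rewrite !coef_fpsB /subst_ty_fps /subst_ty.
by case: (i <= j)%N; rewrite ?subr0.
Qed.

Lemma subst_ty_fpsM A B : St (A * B) = St A * St B.
Proof.
apply: funext => i; apply: funext => j; rewrite -!mul2E /mul2 /subst_ty_fps /subst_ty.
case: (leqP i j) => le_ij; last first.
  rewrite big1 // => a _; rewrite big1 // => b _.
  case: ifP => le_ab; last by rewrite mul0r.
  case: ifP => le_ia_jb; last by rewrite mulr0.
  have := ltn_ord a; have := ltn_ord b; lia.
apply: eq_bigr => a _.
have le_ai : (a <= i)%N by rewrite -ltnS.
rewrite -(big_mkord xpredT (fun c => A a c * B (i - a)%N (j - i - c)%N)).
set tm := (fun b => (if (a <= b)%N then A a (b - a)%N else 0) *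
   (if (i - a <= j - b)%N then B (i - a)%N (j - b - (i - a))%N else 0)).
rewrite -(big_mkord xpredT tm).
rewrite [RHS](@big_cat_nat _ _ _ a) //=; last by lia.
rewrite [X in _ = X + _]big_nat_cond [X in _ = X + _]big1 ?add0r; last first.
  by move=> b /andP[/andP[_ lt_ba] _]; rewrite /tm leqNgt lt_ba mul0r.
have := big_addn 0 j.+1 a xpredT tm; rewrite add0n => ->.
rewrite [RHS](@big_cat_nat _ _ _ (j - i).+1) //=; last by lia.
rewrite [X in _ = _ + X]big_nat_cond [X in _ = _ + X]big1 ?addr0; last first.
  move=> c /andP[/andP[gt_c lt_c] _].
  have B_out : (i - a <= j - (c + a))%N = false by apply: negbTE; rewrite -ltnNge; lia.
  by rewrite /tm B_out mulr0.
apply: eq_big_nat => c /andP[_ lt_c].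
rewrite /tm leq_addl addnK ifT; last by lia.
by have -> : (j - (c + a) - (i - a) = j - i - c)%N by lia.
Qed.

Lemma subst_ty_is_monoid_morphism : monoid_morphism St.
Proof.
split; last exact: subst_ty_fpsM.
by rewrite -one2E; apply: funext => -[|i]; apply: funext => j;
  rewrite /subst_ty_fps /subst_ty /one2 /= ?subn0 //; case: ifP.
Qed.

End SubstTy.

HB.instance Definition _ (F : fieldType) :=
  GRing.isZmodMorphism.Build (fps (fps F)) (fps (fps F)) (@subst_ty_fps F)
    (@subst_ty_is_zmod_morphism F).
HB.instance Definition _ (F : fieldType) :=
  GRing.isMonoidMorphism.Build (fps (fps F)) (fps (fps F)) (@subst_ty_fps F)
    (@subst_ty_is_monoid_morphism F).

Section SubstTyTheory.
Variable F : fieldType.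
Local Notation fps2 := (fps (fps F)).
Local Notation St := (@subst_ty_fps F).
Implicit Types A B : fps2.

(* Restated so that rewriting keeps the head [subst_ty_fps] instead of a
   structure projection, which the lemmas on [subst_ty_fps] could not match. *)
Lemma subst_ty_fpsD A B : St (A + B) = St A + St B.
Proof. exact: rmorphD. Qed.

Lemma subst_ty_fpsXn A n : St (A ^+ n) = St A ^+ n.
Proof. exact: rmorphXn. Qed.

Lemma subst_ty_fps_nat n : St n%:R = n%:R.
Proof. exact: rmorph_nat. Qed.

Lemma subst_ty_fps_div A B : B \is a GRing.unit -> St (A / B) = St A / St B.
Proof. exact: rmorph_div. Qed.

Lemma diag_Y2_subst_ty W i : ((Y2 F : fps2) ^+ 2 * St W) i i = 0.
Proof.
rewrite expr2 -mulrA coef_Y2M; case: i => [|i] //; rewrite coef_Y2M.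
by case: i => [|i] //; rewrite /subst_ty_fps /subst_ty ifN // -ltnNge.
Qed.

End SubstTyTheory.

Section DerivY.
Variable F : fieldType.
Local Notation fps2 := (fps (fps F)).
Local Notation dy := (@dy2 F : fps2 -> fps2).
Implicit Types A B : fps2.

Lemma natr_coef_fpsMS (f g : fps F) j :
  j.+1%:R * (f * g) j.+1 =
  \sum_(b < j.+1) (b.+1%:R * f b.+1) * g (j - b)%N +
  \sum_(b < j.+1) f b * ((j - b).+1%:R * g (j - b).+1).
Proof.
rewrite coef_fpsM mulr_sumr (eq_bigr (fun b : 'I_j.+2 =>
  b%:R * (f b * g (j.+1 - b)%N) + (j.+1 - b)%:R * (f b * g (j.+1 - b)%N))); last first.
  by move=> b _; rewrite -mulrDl -natrD subnKC // -ltnS.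
rewrite big_split /=; congr (_ + _).
  rewrite big_ord_recl /= mul0r add0r; apply: eq_bigr => b _.
  by rewrite /bump /= add1n subSS mulrA.
rewrite big_ord_recr /= subnn mul0r addr0; apply: eq_bigr => b _ /=.
by rewrite -subSn -1?ltnS // mulrCA.
Qed.

Lemma dy2M A B : dy (A * B) = dy A * B + A * dy B.
Proof.
apply: funext => i; apply: funext => j; rewrite !coef_fpsD /dy2 -!mul2E /mul2.
by rewrite mulr_sumr -big_split; apply: eq_bigr => a _; rewrite -!coef_fpsM natr_coef_fpsMS.
Qed.

Lemma dy2X A n : dy (A ^+ n.+1) = n.+1%:R * A ^+ n * dy A.
Proof.
elim: n => [|n IHn]; first by rewrite expr1 expr0 mulr1 mul1r.
rewrite exprS dy2M IHn exprS -[n.+2]addn1 natrD.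
by move: (dy A) => D; ring.
Qed.

End DerivY.

Section Diagonal.
Variable F : fieldType.
Local Notation fps2 := (fps (fps F)).
Local Notation Y := (Y2 F : fps2).
Variable phi : ps1 F.
Hypothesis phi0 : phi 0 = 0.

(* [psi] is [phi(ty) / y], a power series because [phi 0 = 0]. *)
Definition psi : fps2 := fun i j => if j.+1 == i then phi i else 0.

Lemma subst_ty_y_minus : subst_ty_fps (y_minus phi) = Y * (1 - psi).
Proof.
apply: funext => i; apply: funext => -[|j]; rewrite coef_Y2M /subst_ty_fps /subst_ty /y_minus.
  by case: i => [|i] //=; rewrite phi0 subrr.
rewrite !coef_fpsB /psi; case: i => [|i] /=; first by rewrite subn0 !subr0; case: j.
rewrite subSS eqSS sub0r (_ : (1 : fps2) i.+1 j = 0) // sub0r.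
case: ltnP => [le_ij|lt_ji]; last by rewrite ifN ?oppr0 //; lia.
by have -> : (j - i == 0)%N = (j == i) by apply/idP/idP => /eqP ?; apply/eqP; lia.
Qed.

Lemma dy2_y_minus : dy2 (y_minus phi) = 1 :> fps2.
Proof.
apply: funext => i; apply: funext => j; rewrite /dy2 /y_minus /= subr0.
by case: i => [|i] //=; case: j => [|j] //=; rewrite ?mulr1 ?mulr0.
Qed.

Lemma unit_1_sub_psi : 1 - psi \is a GRing.unit.
Proof. by rewrite fps2_unitE !coef_fpsB subr0 oner_eq0. Qed.

Let I := (1 - psi)^-1.

Lemma coef_inv_1_sub_psi i j :
  I i j = (1 : fps2) i j + \sum_(a < i.+1) \sum_(b < j.+1) I a b * psi (i - a)%N (j - b)%N.
Proof.
have I_fix : I = 1 + I * psi.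
  by apply/eqP; rewrite -subr_eq -{1}[I]mulr1 -mulrBr mulVr ?unit_1_sub_psi.
by rewrite {1}I_fix coef_fpsD -mul2E.
Qed.

Lemma coef_inv_1_sub_psi_lt i j : (i < j)%N -> I i j = 0.
Proof.
elim/ltn_ind: i j => i IHi j lt_ij; rewrite coef_inv_1_sub_psi big1 ?addr0.
  by case: i lt_ij {IHi} => [|i]; case: j.
move=> a _; rewrite big1 // => b _; rewrite /psi; case: eqP => [eq_ab|]; last by rewrite mulr0.
have := ltn_ord a; have := ltn_ord b => lt_b lt_a.
by rewrite IHi ?mul0r //; lia.
Qed.

Lemma coef_inv_1_sub_psi_diag k : I k k = (k == 0)%:R.
Proof.
rewrite coef_inv_1_sub_psi big1 ?addr0; first by case: k.
move=> a _; rewrite big1 // => b _; rewrite /psi; case: eqP => [eq_ab|]; last by rewrite mulr0.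
have := ltn_ord a; have := ltn_ord b => lt_b lt_a.
by rewrite coef_inv_1_sub_psi_lt ?mul0r //; lia.
Qed.

Lemma coef_inv_1_sub_psi_subdiag n : I n.+1 n = phi n.+1.
Proof.
rewrite coef_inv_1_sub_psi add0r big_ord_recl [X in X + _]big_ord_recl /=.
rewrite coef_inv_1_sub_psi_diag mul1r !subn0 /psi eqxx big1 ?addr0; last first.
  by move=> i _; rewrite coef_inv_1_sub_psi_lt ?mul0r.
rewrite big1 ?addr0 // => a _; rewrite big1 // => b _.
case: eqP => [eq_ab|]; last by rewrite mulr0.
have -> : b = bump 0 a :> nat by move: (ltn_ord b) eq_ab; rewrite /bump /=; lia.
by rewrite coef_inv_1_sub_psi_diag mul0r.
Qed.

Lemma diag_Y_div_1_sub_psi i : (Y / (1 - psi)) i i = phi i.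
Proof. by rewrite coef_Y2M; case: i => [|i] //; rewrite -/I coef_inv_1_sub_psi_subdiag. Qed.

End Diagonal.

Lemma logderiv_identity (R : comUnitRingType) (Y u U dQ E : R) k :
  u \is a GRing.unit -> E * U \is a GRing.unit ->
  (Y / u + Y ^+ 2 * (dQ / (E * U))) * (E * ((Y * u) ^+ k.+1 * U)) =
  Y ^+ 2 * (E * (Y * u) ^+ k * U + (Y * u) ^+ k.+1 * dQ).
Proof.
move=> u_unit EU_unit; rewrite [(Y * u) ^+ k.+1]exprS.
transitivity (Y ^+ 2 * (E * (Y * u) ^+ k * U * (u^-1 * u) +
   Y * u * (Y * u) ^+ k * dQ * ((E * U)^-1 * (E * U)))); first ring.
by rewrite !mulVr //; ring.
Qed.

Section LogDerivative.
Variable F : fieldType.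
Local Notation fps2 := (fps (fps F)).
Local Notation Y := (Y2 F : fps2).
Local Notation St := (@subst_ty_fps F).
Local Notation dy := (@dy2 F : fps2 -> fps2).
Variables (phi : ps1 F) (Q : fps2) (k : nat).
Hypotheses (phi0 : phi 0 = 0) (Q00 : Q 0 0 != 0) (e_neq0 : k.+1%:R != 0 :> F).

Let P : fps2 := (y_minus phi : fps2) ^+ k.+1 * Q.
Let E : fps2 := k.+1%:R.

(* [y^2 P_y / (e P)] at [(ty, y)], computed from [P_y / P = e / (y - phi) + Q_y / Q]. *)
Definition logderiv_quot : fps2 :=
  Y / (1 - psi phi) + Y ^+ 2 * St (dy Q / (E * Q)).

Lemma diag_logderiv_quot i : logderiv_quot i i = phi i.
Proof. by rewrite /logderiv_quot !coef_fpsD diag_Y_div_1_sub_psi // diag_Y2_subst_ty addr0. Qed.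

Lemma logderiv_quotP R : R * (E * St P) = Y ^+ 2 * St (dy P) <-> R = logderiv_quot.
Proof.
set u := 1 - psi phi; set U := St Q.
have u_unit : u \is a GRing.unit := unit_1_sub_psi phi.
have U_unit : U \is a GRing.unit by rewrite fps2_unitE.
have E_unit : E \is a GRing.unit by rewrite fps2_unitE /E coef_fps2_natr.
have StP : St P = (Y * u) ^+ k.+1 * U.
  by rewrite /P subst_ty_fpsM subst_ty_fpsXn subst_ty_y_minus // -/u.
have StdP : St (dy P) = E * (Y * u) ^+ k * U + (Y * u) ^+ k.+1 * St (dy Q).
  rewrite /P dy2M dy2X dy2_y_minus [X in X * Q]mulr1 subst_ty_fpsD !subst_ty_fpsM.
  by rewrite !subst_ty_fpsXn subst_ty_fps_nat subst_ty_y_minus // -/u.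
have St_div : St (dy Q / (E * Q)) = St (dy Q) / (E * U).
  by rewrite subst_ty_fps_div ?unitrM ?E_unit ?fps2_unitE // subst_ty_fpsM subst_ty_fps_nat.
have reg : GRing.rreg (E * St P).
  rewrite StP exprMn mulrCA -mulrA; apply: rregM; first by apply: rregX; apply: Y2_rreg.
  by apply: mulIr; rewrite !unitrM E_unit U_unit unitrX.
have solution : logderiv_quot * (E * St P) = Y ^+ 2 * St (dy P).
  by rewrite /logderiv_quot St_div StP StdP logderiv_identity ?unitrM ?E_unit.
split => [eqR|->//]; apply: reg; by rewrite eqR solution.
Qed.

End LogDerivative.

Lemma eqs2E (F : fieldType) (A B : ps2 F) : eqs2 A B = (A = B).
Proof.
by rewrite propeqE; split => [AB|-> //]; apply: funext => i; apply: funext => j.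
Qed.

Theorem theorem3p1 (F : fieldType) (P Q : ps2 F) (phi : ps1 F) (e : nat) :
  (1 <= e)%N ->
  e%:R != 0 :> F ->
  eqs2 P (mul2 (pow2 (y_minus phi) e) Q) ->
  phi 0%N = 0 ->
  Q 0%N 0%N != 0 ->
  (exists R : ps2 F,
      eqs2 (mul2 R (scale2 e%:R (subst_ty P)))
           (mul2 (pow2 (Y2 F) 2) (subst_ty (dy2 P)))) /\
  (forall R : ps2 F,
      eqs2 (mul2 R (scale2 e%:R (subst_ty P)))
           (mul2 (pow2 (Y2 F) 2) (subst_ty (dy2 P))) ->
      forall i, phi i = diag2 R i).
Proof.
case: e => // k _ e_neq0; rewrite eqs2E mul2E pow2E => -> phi0 Q00.
rewrite scale2_natE pow2E; split => [|R].
  exists (logderiv_quot phi Q k).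
  by rewrite eqs2E !mul2E; apply/(logderiv_quotP phi0 Q00 e_neq0).
rewrite eqs2E !mul2E => /(logderiv_quotP phi0 Q00 e_neq0) -> i.
by rewrite /diag2 diag_logderiv_quot.
Qed.
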